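(* Let $G$ be a group, $\Lambda$ an ordered abelian group, $\delta\in\Lambda$, $\delta\geqslant0$, and $l:G\to\Lambda$ a $\delta$-hyperbolic length function. For every $k\in\mathbb{N}$: if $l$ satisfies $(R1,k)$ then it satisfies $(R2,k+1)$; and if $l$ satisfies $(R2,k)$ then it satisfies $(R1,k)$.
   Context: $\Lambda_{\mathbb{Q}}$ is the ordered divisible hull of $\Lambda$, containing $\Lambda$. A length function on $G$ is $l:G\to\Lambda$ with $l(g)\geqslant0$, $l(1)=0$, $l(g)=l(g^{-1})$, $l(gh)\leqslant l(g)+l(h)$. Let $c(g,h)=\tfrac12(l(g)+l(h)-l(g^{-1}h))\in\Lambda_{\mathbb{Q}}$; $l$ is $\delta$-hyperbolic if $c(f,g)\geqslant\min\{c(f,h),c(g,h)\}-\delta$ for all $f,g,h$. For $\alpha\in\Lambda$ and $g,u,g_1\in G$, write $g=u\circ_\alpha g_1$ if $g=ug_1$ and $c(u^{-1},g_1)\leqslant\alpha$. $(R1,k)$: for all $g,h\in G$ there exist $u,g_1,h_1\in G$ with $g=u\circ_{k\delta}g_1$, $h=u\circ_{k\delta}h_1$ and $g^{-1}h=g_1^{-1}\circ_{k\delta}h_1$. $(R2,k)$: for all $g,h\in G$ there exists $u\in G$ with $l(u)\leqslant c(g,h)+k\delta$, $l(u^{-1}g)\leqslant c(g^{-1},g^{-1}h)+k\delta$ and $l(u^{-1}h)\leqslant c(h^{-1},h^{-1}g)+k\delta$. *)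

From mathcomp Require Import all_boot all_algebra.
Set Implicit Arguments. Unset Strict Implicit. Unset Printing Implicit Defensive.
Import GRing.Theory.
Local Open Scope ring_scope.

Definition is_group (G : Type) (mul : G -> G -> G) (one : G) (inv : G -> G) : Prop :=
  [/\ (forall x y z, mul x (mul y z) = mul (mul x y) z),
      (forall x, mul one x = x), (forall x, mul x one = x),
      (forall x, mul (inv x) x = one) & (forall x, mul x (inv x) = one)].

Definition is_ordered_abelian_group (L : zmodType) (le : rel L) : Prop :=
  [/\ (forall x, le x x),
      (forall x y, le x y -> le y x -> x = y),
      (forall x y z, le x y -> le y z -> le x z),
      (forall x y, le x y || le y x)
    & (forall x y z, le x y -> le (x + z) (y + z))].

Definition omin (L : Type) (le : rel L) (a b : L) : L := if le a b then a else b.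

Section LengthFunctions.
Variables (G : Type) (mul : G -> G -> G) (one : G) (inv : G -> G).
Variables (L : zmodType) (le : rel L).

Definition is_length_function (l : G -> L) : Prop :=
  [/\ (forall g, le 0 (l g)), l one = 0,
      (forall g, l g = l (inv g))
    & (forall g h, le (l (mul g h)) (l g + l h))].

(* c2 l g h = 2 * c(g,h) = l g + l h - l (g^-1 h); this lies in L.
   All statements involving c (which lives in the divisible hull L_Q)
   are multiplied by 2, which is an order isomorphism of L_Q. *)
Definition c2 (l : G -> L) (g h : G) : L := l g + l h - l (mul (inv g) h).

Definition is_hyperbolic (l : G -> L) (delta : L) : Prop :=
  forall f g h, le (omin le (c2 l f h) (c2 l g h) - delta *+ 2) (c2 l f g).

(* g = u o_alpha g1 :  g = u g1  and  c(u^-1, g1) <= alpha  (doubled) *)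
Definition circ_eq (l : G -> L) (alpha : L) (g u g1 : G) : Prop :=
  g = mul u g1 /\ le (c2 l (inv u) g1) (alpha *+ 2).

Definition R1 (l : G -> L) (delta : L) (k : nat) : Prop :=
  forall g h : G, exists u g1 h1 : G,
    [/\ circ_eq l (delta *+ k) g u g1,
        circ_eq l (delta *+ k) h u h1
      & circ_eq l (delta *+ k) (mul (inv g) h) (inv g1) h1].

Definition R2 (l : G -> L) (delta : L) (k : nat) : Prop :=
  forall g h : G, exists u : G,
    [/\ le ((l u) *+ 2) (c2 l g h + (delta *+ k) *+ 2),
        le ((l (mul (inv u) g)) *+ 2)
           (c2 l (inv g) (mul (inv g) h) + (delta *+ k) *+ 2)
      & le ((l (mul (inv u) h)) *+ 2)
           (c2 l (inv h) (mul (inv h) g) + (delta *+ k) *+ 2)].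

End LengthFunctions.

(* Read l as the left-invariant pseudometric
   dist x y = l (x^-1 y), and write gromov x y z = 2 (y|z)_x for the doubled
   Gromov product (all quantities involving c are doubled).
   For a triangle x, y, z and a point w consider two notions:
   - w is a tripod point when (x|y)_w, (x|z)_w, (y|z)_w <= e, i.e. w lies
     e-close to all three "sides";
   - w is an internal point when dist v w <= (v'|v'')_v + e for each vertex v.
   (R1,k) says exactly that every triangle (1, g, h) has a tripod point, and
   (R2,k) that it has an internal point, both with e = k delta.  Two local
   facts finish the proof: a tripod point is an internal point with
   e + delta (one application of hyperbolicity at each vertex), and an
   internal point is a tripod point with the same e (since
   (y|z)_x + (x|z)_y = dist x y, adding two vertex bounds gives (x|y)_w). *)
From mathcomp Require Import all_boot all_algebra.
Import GRing.Theory.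
Local Open Scope ring_scope.
Set Implicit Arguments. Unset Strict Implicit.

(* Prove an identity between signed sums of atoms in an abelian group:
   reduce it to a left-associated sum [0 + ... = 0] and cancel every
   negated atom against a positive occurrence by moving both to the end. *)
Ltac cancel_atom x :=
  do 20?rewrite (addrAC _ x); do 20?rewrite (addrAC _ (- x));
  rewrite ?addrK ?subrK ?subrr ?addr0 ?addrA.
Ltac abelian :=
  apply/eqP; rewrite -subr_eq0; apply/eqP;
  rewrite ?mulr2n ?opprD ?opprK ?addrA -[LHS]add0r;
  repeat match goal with |- context [ - ?x ] => progress cancel_atom x end;
  try reflexivity.

Section OrderedAbelianGroup.
Variables (L : zmodType) (le : rel L).
Hypothesis HL : is_ordered_abelian_group le.

Lemma le_trans x y z : le x y -> le y z -> le x z.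
Proof. by case: HL => _ _ trans _ _; apply: trans. Qed.

Lemma le_addr x y z : le x y -> le (x + z) (y + z).
Proof. by case: HL => _ _ _ _ addr; apply: addr. Qed.

Lemma le_add a b c d : le a b -> le c d -> le (a + c) (b + d).
Proof.
move=> hab hcd; apply: (le_trans (le_addr c hab)).
by rewrite !(addrC b); apply: le_addr.
Qed.

Lemma le_of_diff A B X Y : le A B -> B - A = Y - X -> le X Y.
Proof.
move=> hAB eAB; have := le_addr (X - A) hAB.
have -> : A + (X - A) = X by abelian.
by have -> : B + (X - A) = Y by rewrite -(subrK X Y) -eAB; abelian.
Qed.

(* Ordered abelian groups are torsion-free, so doubling reflects the order;
   this is what makes the doubled statements faithful. *)
Lemma le_half x y : le (x *+ 2) (y *+ 2) -> le x y.
Proof.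
move=> h2; case: HL => refl anti _ total _.
case/orP: (total x y) => // hyx.
have h1 : le (y *+ 2) (x + y) by rewrite mulr2n; apply: le_addr.
have h3 : le (x + y) (x *+ 2).
  by rewrite mulr2n addrC; apply: le_add => //; apply: refl.
have : x + y = x *+ 2 by apply: anti => //; apply: le_trans h2 h1.
by rewrite mulr2n => /addrI ->; apply: refl.
Qed.

Lemma le_min X a b : le X a -> le X b -> le X (omin le a b).
Proof. by rewrite /omin; case: (le a b). Qed.

End OrderedAbelianGroup.

Section GroupLaws.
Variables (G : Type) (mul : G -> G -> G) (one : G) (inv : G -> G).
Hypothesis HG : is_group mul one inv.

Lemma mulA x y z : mul x (mul y z) = mul (mul x y) z.
Proof. by case: HG. Qed.

Lemma mul1g x : mul one x = x.
Proof. by case: HG. Qed.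

Lemma mulg1 x : mul x one = x.
Proof. by case: HG. Qed.

Lemma mulKg x y : mul (inv x) (mul x y) = y.
Proof. by case: HG => assoc l1 _ lV _; rewrite assoc lV l1. Qed.

Lemma mulKVg x y : mul x (mul (inv x) y) = y.
Proof. by case: HG => assoc l1 _ _ rV; rewrite assoc rV l1. Qed.

Lemma invK x : inv (inv x) = x.
Proof.
by rewrite -[inv (inv x)]mulg1; case: HG => _ _ _ lV _; rewrite -(lV x) mulKg.
Qed.

Lemma inv1 : inv one = one.
Proof. by rewrite -[inv one]mulg1; case: HG => _ _ _ lV _; rewrite lV. Qed.

Lemma invM x y : inv (mul x y) = mul (inv y) (inv x).
Proof.
have e : mul x (mul y (mul (inv y) (inv x))) = one.
  by case: HG => _ _ _ _ rV; rewrite mulKVg rV.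
by rewrite -[LHS]mulg1 -e (mulA x) mulKg.
Qed.

End GroupLaws.

Section HyperbolicTriangles.
Variables (G : Type) (mul : G -> G -> G) (one : G) (inv : G -> G).
Hypothesis HG : is_group mul one inv.
Variables (L : zmodType) (le : rel L).
Hypothesis HL : is_ordered_abelian_group le.
Variables (l : G -> L) (delta : L).
Hypothesis Hl : is_length_function mul one inv le l.
Hypothesis Hhyp : is_hyperbolic mul inv le l delta.

Definition dist (x y : G) : L := l (mul (inv x) y).

Definition gromov (x y z : G) : L := dist x y + dist x z - dist y z.

Definition between (e : L) (x w y : G) : Prop := le (gromov w x y) (e *+ 2).

Definition tripod_point (e : L) (x y z w : G) : Prop :=
  [/\ between e x w y, between e x w z & between e y w z].

Definition internal_point (e : L) (x y z w : G) : Prop :=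
  [/\ le (dist x w *+ 2) (gromov x y z + e *+ 2),
      le (dist y w *+ 2) (gromov y x z + e *+ 2)
    & le (dist z w *+ 2) (gromov z x y + e *+ 2)].

Lemma dist_sym x y : dist x y = dist y x.
Proof. by case: Hl => _ _ linv _; rewrite /dist linv (invM HG) (invK HG). Qed.

Lemma dist1 a : dist one a = l a.
Proof. by rewrite /dist (inv1 HG) (mul1g HG). Qed.

Lemma c2_gromov x y z : c2 mul inv l (mul (inv x) y) (mul (inv x) z) = gromov x y z.
Proof.
by rewrite /c2 /gromov /dist (invM HG) (invK HG) -(mulA HG) (mulKVg HG).
Qed.

Lemma c2_gromov1 x y : c2 mul inv l (inv x) (mul (inv x) y) = gromov x one y.
Proof. by rewrite -c2_gromov (mulg1 HG). Qed.

Lemma gromov_sym x y z : gromov x y z = gromov x z y.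
Proof. by rewrite /gromov (addrC (dist x y)) (dist_sym y). Qed.

Lemma between_sym e x w y : between e x w y -> between e y w x.
Proof. by rewrite /between gromov_sym. Qed.

Lemma gromov_swap x y z : gromov x y z + gromov y x z = dist x y *+ 2.
Proof. by rewrite /gromov (dist_sym y x); abelian. Qed.

Lemma hyperbolic_at x y z w :
  le (omin le (gromov x y w) (gromov x z w) - delta *+ 2) (gromov x y z).
Proof.
by have := Hhyp (mul (inv x) y) (mul (inv x) z) (mul (inv x) w); rewrite !c2_gromov.
Qed.

Lemma vertex_bound e x y z w : between e x w y -> between e x w z ->
  le (dist x w *+ 2) (gromov x y z + (e + delta) *+ 2).
Proof.
have lower v : between e x w v -> le (dist x w *+ 2 - e *+ 2) (gromov x v w).
  move=> hv; apply: (le_of_diff HL hv).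
  have := gromov_swap x w v; rewrite (gromov_sym x w) (dist_sym x w) /gromov.
  by move=> eswap; rewrite -[in RHS]eswap; abelian.
move=> hy hz; have hmin := le_min (lower y hy) (lower z hz).
apply: (le_of_diff HL (le_trans HL (le_addr HL (- (delta *+ 2)) hmin) (hyperbolic_at x y z w))).
by rewrite mulrnDl; abelian.
Qed.

Lemma between_of_bounds e x y z w :
  le (dist x w *+ 2) (gromov x y z + e *+ 2) ->
  le (dist y w *+ 2) (gromov y x z + e *+ 2) -> between e x w y.
Proof.
move=> hx hy; have := le_add HL hx hy.
rewrite [X in le _ X]addrACA gromov_swap => hsum; apply: (le_half HL).
apply: (le_of_diff HL hsum).
by rewrite /gromov (dist_sym w x) (dist_sym w y); abelian.
Qed.

Lemma internal_of_tripod e x y z w :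
  tripod_point e x y z w -> internal_point (e + delta) x y z w.
Proof.
case=> hxy hxz hyz; split; apply: vertex_bound => //; exact: between_sym.
Qed.

Lemma tripod_of_internal e x y z w :
  internal_point e x y z w -> tripod_point e x y z w.
Proof.
case=> hx hy hz; split.
- exact: between_of_bounds hx hy.
- by apply: (between_of_bounds (z := y)) hz; rewrite gromov_sym.
- by apply: (between_of_bounds (z := x)); rewrite gromov_sym.
Qed.

Lemma R1_tripod k :
  R1 mul inv le l delta k <->
  forall g h, exists u, tripod_point (delta *+ k) one g h u.
Proof.
split=> R g h.
- have [u [g1 [h1 [[-> hg] [-> hh] [_ hgh]]]]] := R g h.
  rewrite (invK HG) in hgh; exists u.
  by rewrite /tripod_point /between -!c2_gromov !(mulg1 HG) !(mulKg HG).
- have [u [hg hh hgh]] := R g h.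
  exists u, (mul (inv u) g), (mul (inv u) h); split; split;
    rewrite ?(mulKVg HG) ?c2_gromov1 ?(invK HG) ?c2_gromov //.
  by rewrite (invM HG) (invK HG) -(mulA HG) (mulKVg HG).
Qed.

Lemma R2_internal k :
  R2 mul inv le l delta k <->
  forall g h, exists u, internal_point (delta *+ k) one g h u.
Proof.
have same g h u : internal_point (delta *+ k) one g h u <->
  [/\ le (l u *+ 2) (c2 mul inv l g h + delta *+ k *+ 2),
      le (l (mul (inv u) g) *+ 2)
         (c2 mul inv l (inv g) (mul (inv g) h) + delta *+ k *+ 2)
    & le (l (mul (inv u) h) *+ 2)
         (c2 mul inv l (inv h) (mul (inv h) g) + delta *+ k *+ 2)].
  rewrite /internal_point dist1 (dist_sym g) (dist_sym h) -!c2_gromov1.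
  by rewrite -c2_gromov (inv1 HG) !(mul1g HG).
by split=> R g h; have [u hu] := R g h; exists u; apply/same.
Qed.

End HyperbolicTriangles.

Theorem mainTheorem13
  (G : Type) (mul : G -> G -> G) (one : G) (inv : G -> G)
  (HG : is_group mul one inv)
  (L : zmodType) (le : rel L) (HL : is_ordered_abelian_group le)
  (delta : L) (Hdelta : le 0 delta)
  (l : G -> L) (Hl : is_length_function mul one inv le l)
  (Hhyp : is_hyperbolic mul inv le l delta) :
  forall k : nat,
    (R1 mul inv le l delta k -> R2 mul inv le l delta k.+1) /\
    (R2 mul inv le l delta k -> R1 mul inv le l delta k).
Proof.
move=> k; split.
- move=> /(R1_tripod HG le l delta k) tripods; apply/(R2_internal HG delta Hl k.+1) => g h.
  have [u hu] := tripods g h; exists u; rewrite mulrSr.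
  exact: (internal_of_tripod HG HL Hl Hhyp).
- move=> /(R2_internal HG delta Hl) internals; apply/(R1_tripod HG le l delta k) => g h.
  have [u hu] := internals g h; exists u.
  exact: (tripod_of_internal HG HL Hl).
Qed.
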